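(* Let $h>0$, let $r\in\{2,4,8,16\}$, let $j\in\{1,\dots,r-1\}$ and put $\theta=j/r$. Place a hanging node at $P=(x_c,y_c)$ and consider the seven points $$A_\pm=(x_c-\theta h,\;y_c\pm h),\quad B_\pm=(x_c+(1-\theta)h,\;y_c\pm h),\quad C=(x_c-\theta h,\;y_c),\quad D=(x_c+(1-\theta)h,\;y_c),\quad P.$$ Define the seven-point scheme for $\Delta u=f$ $$\alpha_{A}\big(U_{A_+}+U_{A_-}\big)+\alpha_{B}\big(U_{B_+}+U_{B_-}\big)+\alpha_C U_C+\alpha_D U_D+\alpha_P U_P=\beta_C f_C+\beta_D f_D,$$ with $$h^2\alpha_A=\frac{2-\theta}{3},\quad h^2\alpha_B=\frac{1+\theta}{3},\quad h^2\alpha_C=\frac{2}{\theta}-\frac43+\frac{2\theta}{3},\quad h^2\alpha_D=\frac{2}{1-\theta}-\frac43+\frac{2(1-\theta)}{3},\quad h^2\alpha_P=-\frac{2}{\theta(1-\theta)},$$ $$\beta_C=\frac{2-\theta}{3},\qquad \beta_D=\frac{1+\theta}{3}$$ (all other weights of $f$, including the one at $P$, are zero). Then: (i) $\beta_C+\beta_D=1$, $\beta_C,\beta_D>0$, all of $\alpha_A,\alpha_B,\alpha_C,\alpha_D$ are positive and $\alpha_P<0$ with $\alpha_P=-(2\alpha_A+2\alpha_B+\alpha_C+\alpha_D)$; (ii) replacing $j$ by $r-j$ (i.e. $\theta$ by $1-\theta$) exchanges the roles of the left points $A_\pm,C$ and the right points $B_\pm,D$ (the coefficients appear in reverse order), and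 the coefficients depend on $j,r$ only through $j/r$; (iii) the scheme is exact for every polynomial $p(x,y)$ of total degree at most $4$ whose coefficients of $x^4$ and of $y^4$ vanish, i.e. for such $p$, $$\alpha_A\big(p(A_+)+p(A_-)\big)+\alpha_B\big(p(B_+)+p(B_-)\big)+\alpha_C p(C)+\alpha_D p(D)+\alpha_P p(P)=\beta_C\,\Delta p(C)+\beta_D\,\Delta p(D).$$
   Context: Setting: a two-grid Cartesian discretization of the Poisson equation $\Delta u=f$ with a coarse mesh of size $h$ and a fine mesh of size $h/r$. A hanging node is a fine-grid point lying on a coarse grid line strictly between two consecutive coarse grid points; here the coarse grid points are at $x=x_c-\theta h$ and $x=x_c+(1-\theta)h$ on the line $y=y_c$, and the neighboring coarse lines are $y=y_c\pm h$. $U_Q$ denotes the discrete approximation of $u(Q)$ and $f_Q=f(Q)$. *)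

From HB Require Import structures.
From mathcomp Require Import all_boot all_order all_algebra.
From mathcomp Require Import mpoly.
Set Implicit Arguments. Unset Strict Implicit. Unset Printing Implicit Defensive.
Import Order.TTheory GRing.Theory Num.Theory.
Local Open Scope ring_scope.

Definition vx : 'I_2 := @Ordinal 2 0 isT.
Definition vy : 'I_2 := @Ordinal 2 1 isT.

Definition pt (R : nzRingType) (x y : R) : 'I_2 -> R :=
  fun i => if val i == 0%N then x else y.

Definition laplacian (R : nzRingType) (p : {mpoly R[2]}) : {mpoly R[2]} :=
  mderiv vx (mderiv vx p) + mderiv vy (mderiv vy p).

Definition mx4 : 'X_{1..2} := (mnm1 vx *+ 4)%MM.
Definition my4 : 'X_{1..2} := (mnm1 vy *+ 4)%MM.

Section Coeffs.
Variable R : realFieldType.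
Definition theta (j r : nat) : R := j%:R / r%:R.

Definition alphaA (h : R) (j r : nat) : R := ((2 - theta j r) / 3) / h ^+ 2.
Definition alphaB (h : R) (j r : nat) : R := ((1 + theta j r) / 3) / h ^+ 2.
Definition alphaC (h : R) (j r : nat) : R :=
  (2 / theta j r - 4 / 3 + 2 * theta j r / 3) / h ^+ 2.
Definition alphaD (h : R) (j r : nat) : R :=
  (2 / (1 - theta j r) - 4 / 3 + 2 * (1 - theta j r) / 3) / h ^+ 2.
Definition alphaP (h : R) (j r : nat) : R :=
  (- (2 / (theta j r * (1 - theta j r)))) / h ^+ 2.
Definition betaC (j r : nat) : R := (2 - theta j r) / 3.
Definition betaD (j r : nat) : R := (1 + theta j r) / 3.

Definition scheme_lhs (h : R) (j r : nat) (xc yc : R) (U : R -> R -> R) : R :=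
  let t := theta j r in
  alphaA h j r * (U (xc - t * h) (yc + h) + U (xc - t * h) (yc - h))
  + alphaB h j r * (U (xc + (1 - t) * h) (yc + h) + U (xc + (1 - t) * h) (yc - h))
  + alphaC h j r * U (xc - t * h) yc
  + alphaD h j r * U (xc + (1 - t) * h) yc
  + alphaP h j r * U xc yc.

Definition scheme_rhs (h : R) (j r : nat) (xc yc : R) (f : R -> R -> R) : R :=
  let t := theta j r in
  betaC j r * f (xc - t * h) yc + betaD j r * f (xc + (1 - t) * h) yc.
End Coeffs.

From HB Require Import structures.
From mathcomp Require Import all_boot all_order all_algebra.
From mathcomp Require Import mpoly.
From mathcomp Require Import ring lra.
Import Order.TTheory GRing.Theory Num.Theory.
Local Open Scope ring_scope.

(* Everything reduces to 0 < theta < 1 and to the mirror identity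
   theta (r - j) r = 1 - theta j r.  For (iii) the defect
   (left-hand side) - (right-hand side) is linear in p, so it suffices to
   check the thirteen admissible monomials x^a y^b (a + b <= 4, (a, b) other
   than (4, 0) and (0, 4)); each check is a rational identity in theta and h. *)

Lemma betaCD_sum (R : realFieldType) (j r : nat) : betaC R j r + betaD R j r = 1.
Proof. by rewrite /betaC /betaD; field. Qed.

Section Coefficients.
Variables (R : realFieldType) (h : R) (j r : nat).
Hypotheses (h_gt0 : 0 < h) (j_gt0 : (0 < j)%N) (j_lt_r : (j < r)%N).

Lemma theta_gt0 : 0 < theta R j r.
Proof. by rewrite /theta divr_gt0 ?ltr0n // (ltn_trans j_gt0). Qed.

Lemma theta_lt1 : theta R j r < 1.
Proof. by rewrite /theta ltr_pdivrMr ?ltr0n ?(ltn_trans j_gt0) // mul1r ltr_nat. Qed.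

Lemma theta_compl : theta R (r - j) r = 1 - theta R j r.
Proof.
rewrite /theta natrB ?(ltnW j_lt_r) // mulrBl divff //.
by rewrite pnatr_eq0 -lt0n (ltn_trans j_gt0).
Qed.

Let t_neq0 : theta R j r != 0. Proof. exact: lt0r_neq0 theta_gt0. Qed.
Let t_neq1 : 1 - theta R j r != 0.
Proof. by rewrite subr_eq0 eq_sym lt_eqF ?theta_lt1. Qed.
Let h_neq0 : h != 0. Proof. exact: lt0r_neq0. Qed.
Let h2_gt0 : 0 < h ^+ 2. Proof. exact: exprn_gt0. Qed.

Lemma betaC_gt0 : 0 < betaC R j r.
Proof. by rewrite /betaC; have := theta_lt1; lra. Qed.

Lemma betaD_gt0 : 0 < betaD R j r.
Proof. by rewrite /betaD; have := theta_gt0; lra. Qed.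

Lemma alphaA_gt0 : 0 < alphaA h j r.
Proof. by rewrite /alphaA divr_gt0 //; have := theta_lt1; lra. Qed.

Lemma alphaB_gt0 : 0 < alphaB h j r.
Proof. by rewrite /alphaB divr_gt0 //; have := theta_gt0; lra. Qed.

(* [2 / s > 2 > 4 / 3] *)
Let numerator_gt0 (s : R) : 0 < s < 1 -> 0 < 2 / s - 4 / 3 + 2 * s / 3.
Proof.
case/andP=> s_gt0 s_lt1; have : 1 < s^-1 by rewrite invf_gt1.
by rewrite mulrC; lra.
Qed.

Lemma alphaC_gt0 : 0 < alphaC h j r.
Proof. by rewrite /alphaC divr_gt0 // numerator_gt0 // theta_gt0 theta_lt1. Qed.

Lemma alphaD_gt0 : 0 < alphaD h j r.
Proof.
rewrite /alphaD divr_gt0 // numerator_gt0 //.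
by rewrite subr_gt0 theta_lt1 ltrBlDr ltrDl theta_gt0.
Qed.

Lemma alphaP_sum :
  alphaP h j r = - (2 * alphaA h j r + 2 * alphaB h j r + alphaC h j r + alphaD h j r).
Proof.
by rewrite /alphaP /alphaA /alphaB /alphaC /alphaD; field; rewrite h_neq0 t_neq0 t_neq1.
Qed.

Lemma alphaP_lt0 : alphaP h j r < 0.
Proof.
rewrite alphaP_sum oppr_lt0.
by have := alphaA_gt0; have := alphaB_gt0; have := alphaC_gt0; have := alphaD_gt0; lra.
Qed.

Lemma coefficients_compl :
  [/\ [/\ alphaA h (r - j) r = alphaB h j r & alphaB h (r - j) r = alphaA h j r],
      [/\ alphaC h (r - j) r = alphaD h j r & alphaD h (r - j) r = alphaC h j r],
      alphaP h (r - j) r = alphaP h j r &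
      [/\ betaC R (r - j) r = betaD R j r & betaD R (r - j) r = betaC R j r]].
Proof.
rewrite /alphaA /alphaB /alphaC /alphaD /alphaP /betaC /betaD theta_compl.
have t_neq0' : 1 - (1 - theta R j r) != 0 by rewrite opprB addrC subrK.
by split; [split|split| |split]; field; rewrite ?h_neq0 ?t_neq0 ?t_neq1 ?t_neq0'.
Qed.

End Coefficients.

Lemma mnm2P (m m' : 'X_{1..2}) : m vx = m' vx -> m vy = m' vy -> m = m'.
Proof.
move=> Ex Ey; apply/mnmP => -[[|[|//]] i_lt2].
- by rewrite (_ : Ordinal _ = vx) //; apply: val_inj.
- by rewrite (_ : Ordinal _ = vy) //; apply: val_inj.
Qed.

Lemma big_I2 (T : Type) (idx : T) (op : Monoid.law idx) (F : 'I_2 -> T) :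
  \big[op/idx]_(i < 2) F i = op (F vx) (F vy).
Proof.
rewrite big_ord_recr big_ord_recr big_ord0 Monoid.mul1m /=.
by congr (op (F _) (F _)); apply: val_inj.
Qed.

Lemma mdeg_I2 (m : 'X_{1..2}) : mdeg m = (m vx + m vy)%N.
Proof. by rewrite mdegE big_I2. Qed.

Lemma meval_ptX (R : realFieldType) (m : 'X_{1..2}) (x y : R) :
  ('X_[m] : {mpoly R[2]}).@[pt x y] = x ^+ m vx * y ^+ m vy.
Proof. by rewrite mevalX big_I2. Qed.

Lemma meval_pt_laplacianX (R : realFieldType) (m : 'X_{1..2}) (x y : R) :
  (laplacian ('X_[m] : {mpoly R[2]})).@[pt x y] =
  (m vx)%:R * (m vx - 1)%:R * x ^+ (m vx - 2) * y ^+ m vy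
  + (m vy)%:R * (m vy - 1)%:R * x ^+ m vx * y ^+ (m vy - 2).
Proof.
rewrite /laplacian !mderivX !mderivZ !mderivX mevalD !mevalZ !meval_ptX.
by rewrite !mnmBE !mnm1E /= -!subnDA !addn0 !subn0 !mulrA.
Qed.

Section Exactness.
Variables (R : realFieldType) (h : R) (j r : nat) (xc yc : R).
Hypotheses (h_neq0 : h != 0) (t_neq0 : theta R j r != 0)
  (t_neq1 : 1 - theta R j r != 0).

Lemma scheme_exact_monomial (a b : nat) :
  (a + b <= 4)%N -> (a, b) != (4%N, 0%N) -> (a, b) != (0%N, 4%N) ->
  scheme_lhs h j r xc yc (fun x y => x ^+ a * y ^+ b) =
  scheme_rhs h j r xc yc (fun x y => a%:R * (a - 1)%:R * x ^+ (a - 2) * y ^+ b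
     + b%:R * (b - 1)%:R * x ^+ a * y ^+ (b - 2)).
Proof.
rewrite /scheme_lhs /scheme_rhs /alphaA /alphaB /alphaC /alphaD /alphaP /betaC /betaD /=.
move: t_neq0 t_neq1; move: (theta R j r) => t t_neq0' t_neq1'.
by case: a => [|[|[|[|[|a]]]]]; case: b => [|[|[|[|[|b]]]]] //= _ _ _;
  rewrite ?(subSS, sub0n, subn0); field; rewrite h_neq0 t_neq0' t_neq1'.
Qed.

Definition scheme_defect (p : {mpoly R[2]}) : R :=
  scheme_lhs h j r xc yc (fun x y => p.@[pt x y])
  - scheme_rhs h j r xc yc (fun x y => (laplacian p).@[pt x y]).

Lemma scheme_defect0 : scheme_defect 0 = 0.
Proof. by rewrite /scheme_defect /scheme_lhs /scheme_rhs /laplacian !mderiv0 !meval0; ring. Qed.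

Lemma scheme_defectD p q : scheme_defect (p + q) = scheme_defect p + scheme_defect q.
Proof. by rewrite /scheme_defect /scheme_lhs /scheme_rhs /laplacian !mderivD !mevalD; ring. Qed.

Lemma scheme_defectZ c p : scheme_defect (c *: p) = c * scheme_defect p.
Proof.
by rewrite /scheme_defect /scheme_lhs /scheme_rhs /laplacian !mderivZ -scalerDr !mevalZ; ring.
Qed.

Lemma scheme_defectX (m : 'X_{1..2}) :
  (mdeg m <= 4)%N -> m != mx4 -> m != my4 -> scheme_defect 'X_[m] = 0.
Proof.
have [x4_vx x4_vy] : (mx4 vx = 4 /\ mx4 vy = 0)%N by rewrite /mx4 !mulmnE !mnm1E.
have [y4_vx y4_vy] : (my4 vx = 0 /\ my4 vy = 4)%N by rewrite /my4 !mulmnE !mnm1E.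
move=> deg_m m_neq_x4 m_neq_y4; apply/eqP; rewrite subr_eq0; apply/eqP.
rewrite /scheme_lhs /scheme_rhs !meval_ptX !meval_pt_laplacianX.
apply: scheme_exact_monomial; first by rewrite -mdeg_I2.
- by apply: contra m_neq_x4 => /eqP[Ex Ey]; apply/eqP/mnm2P; rewrite ?Ex ?Ey.
- by apply: contra m_neq_y4 => /eqP[Ex Ey]; apply/eqP/mnm2P; rewrite ?Ex ?Ey.
Qed.

Lemma scheme_exact (p : {mpoly R[2]}) :
  (msize p <= 5)%N -> p@_mx4 = 0 -> p@_my4 = 0 -> scheme_defect p = 0.
Proof.
move=> size_p p_x4 p_y4; rewrite (mpolyE p).
rewrite (big_morph scheme_defect scheme_defectD scheme_defect0) big_seq big1 // => m m_supp.
rewrite scheme_defectZ scheme_defectX ?mulr0 //.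
- by rewrite -ltnS (leq_trans _ size_p) // msize_mdeg_lt.
- by apply: contraTneq m_supp => ->; rewrite mcoeff_msupp p_x4 eqxx.
- by apply: contraTneq m_supp => ->; rewrite mcoeff_msupp p_y4 eqxx.
Qed.

End Exactness.

Theorem mainTheorem2 (R : realFieldType) (h : R) (r j : nat) (xc yc : R) :
  0 < h -> r \in [:: 2; 4; 8; 16]%N -> (0 < j < r)%N ->
  (* (i) *)
  [/\ [/\ betaC R j r + betaD R j r = 1 :> R, 0 < betaC R j r & 0 < betaD R j r],
      [/\ 0 < alphaA h j r, 0 < alphaB h j r, 0 < alphaC h j r & 0 < alphaD h j r],
      alphaP h j r < 0 &
      alphaP h j r = - (2 * alphaA h j r + 2 * alphaB h j r + alphaC h j r + alphaD h j r)]
  (* (ii) theta -> 1 - theta swaps left and right coefficients *)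
  /\ [/\ [/\ alphaA h (r - j) r = alphaB h j r & alphaB h (r - j) r = alphaA h j r],
         [/\ alphaC h (r - j) r = alphaD h j r & alphaD h (r - j) r = alphaC h j r],
         alphaP h (r - j) r = alphaP h j r &
         [/\ betaC R (r - j) r = betaD R j r & betaD R (r - j) r = betaC R j r]]
  (* (ii) the coefficients depend on j, r only through j / r *)
  /\ (forall j' r' : nat, (j'%:R / r'%:R : R) = j%:R / r%:R ->
        [/\ [/\ alphaA h j' r' = alphaA h j r, alphaB h j' r' = alphaB h j r,
                 alphaC h j' r' = alphaC h j r & alphaD h j' r' = alphaD h j r],
            alphaP h j' r' = alphaP h j r,
            betaC R j' r' = betaC R j r & betaD R j' r' = betaD R j r])
  (* (iii) exactness on polynomials of total degree <= 4 without x^4, y^4 terms *)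
  /\ (forall p : {mpoly R[2]},
        (msize p <= 5)%N -> p@_mx4 = 0 -> p@_my4 = 0 ->
        scheme_lhs h j r xc yc (fun x y => p.@[pt x y])
        = scheme_rhs h j r xc yc (fun x y => (laplacian p).@[pt x y])).
Proof.
move=> h_gt0 _ /andP[j_gt0 j_lt_r].
split; [|split; [|split]].
- split; first split.
  + exact: betaCD_sum.
  + exact: betaC_gt0.
  + exact: betaD_gt0.
  + by split; [exact: alphaA_gt0|exact: alphaB_gt0|exact: alphaC_gt0|exact: alphaD_gt0].
  + exact: alphaP_lt0.
  + exact: alphaP_sum.
- exact: coefficients_compl.
- move=> j' r' E.
  by rewrite /alphaA /alphaB /alphaC /alphaD /alphaP /betaC /betaD /theta E.
- move=> p size_p p_x4 p_y4; apply/eqP; rewrite -subr_eq0; apply/eqP.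
  apply: scheme_exact => //.
  + exact: lt0r_neq0.
  + by apply: lt0r_neq0; apply: theta_gt0.
  + by rewrite subr_eq0 eq_sym lt_eqF ?theta_lt1.
Qed.
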